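(* Let $(W,S)$ be a dihedral Coxeter system (i.e. $|S|=2$). Let $u,v\in W$ with $u<v$, and let $R=\{\alpha_t\in\Phi^+:\ u\leq vt\lhd v\}$ and $R'=\{\alpha_t\in\Phi^+:\ u\lhd ut\leq v\}$. Then the intersections $R\cap\operatorname{Cone}(R')$ and $R'\cap\operatorname{Cone}(R)$ are non-empty.
   Context: $\Phi^+$ is the set of positive roots of the standard geometric representation; $t$ ranges over reflections $T=\{wsw^{-1}\}$ and $\alpha_t$ is the positive root of $t$. $\leq$ is Bruhat order, $\lhd$ its covering relation. $\operatorname{Cone}(A)$ is the set of finite nonnegative linear combinations of elements of $A$. *)

From Stdlib Require Import Reals Relations.
From HB Require Import structures.
From mathcomp Require Import all_boot all_order all_algebra.
From mathcomp Require Import Rstruct.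
Set Implicit Arguments. Unset Strict Implicit. Unset Printing Implicit Defensive.
Import Order.TTheory GRing.Theory Num.Theory.
Local Open Scope ring_scope.

(* A dihedral Coxeter system (W,S), S = {s_0, s_1}, is determined by
   m = m(s_0,s_1) in {2,3,...} U {oo}; we encode it as [m : option nat]
   (None = oo).  W is realised through its (faithful) standard geometric
   representation on V = R^2 with basis the simple roots alpha_0, alpha_1. *)

Definition vec := 'cV[R]_2.
Definition mat := 'M[R]_2.

(* B(alpha_0, alpha_1) = - cos (pi / m), and -1 if m = oo. *)
Definition cosm (m : option nat) : R :=
  match m with Some k => cos (PI / INR k)%R | None => 1 end.

Definition Bmat (m : option nat) : mat :=
  \matrix_(i < 2, j < 2) (if i == j then 1 else - cosm m).

Definition Bform (m : option nat) (x y : vec) : R := (x^T *m Bmat m *m y) 0 0.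

Definition simple_root (i : 'I_2) : vec := delta_mx i 0.

Definition refl (m : option nat) (beta : vec) : mat :=
  1%:M - 2%:R *: (beta *m (beta^T *m Bmat m)).

Definition gen (m : option nat) (i : 'I_2) : mat := refl m (simple_root i).

Definition evalw (m : option nat) (w : seq 'I_2) : mat :=
  \prod_(i <- w) gen m i.

Definition inW (m : option nat) (x : mat) : Prop := exists w, x = evalw m w.

Definition has_len (m : option nat) (x : mat) (n : nat) : Prop :=
  (exists w, size w = n /\ evalw m w = x) /\
  (forall w, evalw m w = x -> (n <= size w)%N).

Definition isRefl (m : option nat) (t : mat) : Prop :=
  exists x i, inW m x /\ t = x *m gen m i *m invmx x.

Definition bruhat_step (m : option nat) (x y : mat) : Prop :=
  inW m x /\ exists t, isRefl m t /\ y = x *m t /\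
    exists a b, has_len m x a /\ has_len m y b /\ (a < b)%N.

Definition bruhat_le (m : option nat) (x y : mat) : Prop :=
  x = y \/ clos_trans mat (bruhat_step m) x y.

Definition bruhat_lt (m : option nat) (x y : mat) : Prop :=
  bruhat_le m x y /\ x <> y.

Definition bruhat_cover (m : option nat) (x y : mat) : Prop :=
  bruhat_lt m x y /\
  forall z, bruhat_le m x z -> bruhat_le m z y -> z = x \/ z = y.

Definition isRoot (m : option nat) (beta : vec) : Prop :=
  exists x i, inW m x /\ beta = x *m simple_root i.

Definition isPosRoot (m : option nat) (beta : vec) : Prop :=
  isRoot m beta /\ forall j : 'I_2, 0 <= beta j 0.

Definition root_of (m : option nat) (t : mat) (beta : vec) : Prop :=
  isRefl m t /\ isPosRoot m beta /\ refl m beta = t.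

Definition Cone (A : vec -> Prop) (x : vec) : Prop :=
  exists (n : nat) (c : 'I_n -> R) (b : 'I_n -> vec),
    (forall k, 0 <= c k /\ A (b k)) /\ x = \sum_(k < n) c k *: b k.

From Stdlib Require Import Reals Lra Relations.
From mathcomp Require Import all_boot all_order all_algebra.
From mathcomp Require Import Rstruct ring.
Set Implicit Arguments. Unset Strict Implicit. Unset Printing Implicit Defensive.
Import Order.TTheory GRing.Theory Num.Theory.

(* Every element of the dihedral group is an alternating word s_i s_j s_i ... of
   length at most m, and this length is its Coxeter length, so Bruhat order compares
   lengths and the elements covered by v (covering u) are obtained by deleting
   (adding) a letter at one end of the word.  Let e be the last letter of v and e'
   the other generator.  Unless R and R' share a root, R = {alpha_e, rho_l(v)} and
   R' = {alpha_e', rho_(l(u)+1)}, where rho_n = U_(n-1)(c) alpha_e + U_(n-2)(c) alpha_e'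
   with U the Chebyshev polynomials of the second kind and c = cos(pi/m) (c = 1 for
   m infinite).  The identity U_(n+q-2) U_(q-1) - U_(n+q-1) U_(q-2) = U_(n-1) and
   the nonnegativity of U_j for j < m put these roots in the order alpha_e,
   rho_(l(u)+1), rho_l(v), alpha_e' in the positive quadrant, so each of R and R'
   meets the cone spanned by the other. *)

(* [cheb c n] is the Chebyshev polynomial U_(n-2)(c) of the second kind;
   the shift by two makes [cheb (cos t) n.+1 * sin t = sin (n t)]. *)
Fixpoint cheb (T : pzRingType) (c : T) (n : nat) : T :=
  match n with
  | 0 => -1
  | 1 => 0
  | (p.+1 as q).+1 => 2%:R * c * cheb c q - cheb c p
  end%R.

Lemma chebSS (T : pzRingType) (c : T) n :
  cheb c n.+2 = (2%:R * c * cheb c n.+1 - cheb c n)%R.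
Proof. by []. Qed.

Section ChebyshevTrig.
Local Open Scope R_scope.

Lemma sin_add_double x t : sin (x + 2 * t) = 2 * cos t * sin (x + t) - sin x.
Proof.
have -> : x + 2 * t = (x + t) + t by lra.
have -> : sin x = sin ((x + t) - t) by f_equal; lra.
rewrite sin_plus sin_minus; lra.
Qed.

Lemma cheb_cos_mul_sin t n : cheb (cos t) n * sin t = sin ((INR n - 1) * t).
Proof.
elim/ltn_ind: n => -[|[|n]] IH.
- have -> : cheb (cos t) 0 = -1 by [].
  have -> : (INR 0 - 1) * t = - t by simpl; lra.
  rewrite sin_neg; lra.
- have -> : cheb (cos t) 1 = 0 by [].
  have -> : (INR 1 - 1) * t = 0 by simpl; lra.
  rewrite sin_0; lra.
have E : cheb (cos t) n.+2 = 2 * cos t * cheb (cos t) n.+1 - cheb (cos t) n.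
  by rewrite /= -/(cheb _ n.+1); congr (_ * _ * _ - _); rewrite /= -RplusE; lra.
rewrite E Rmult_minus_distr_r !Rmult_assoc (IH n.+1) // (IH n (leqW (ltnSn n))).
have -> : (INR n.+2 - 1) * t = (INR n - 1) * t + 2 * t by rewrite !S_INR; lra.
rewrite sin_add_double.
have -> : (INR n - 1) * t + t = (INR n.+1 - 1) * t by rewrite S_INR; lra.
lra.
Qed.

Section RegularDihedral.
Variable k : nat.
Hypothesis k_ge2 : (2 <= k)%N.
Let t := PI / INR k.
Let c := cos t.

Let kt : INR k * t = PI.
Proof.
rewrite /t /Rdiv Rmult_comm Rmult_assoc Rinv_l ?Rmult_1_r //.
by apply: not_0_INR => k0; move: k_ge2; rewrite k0.
Qed.

Let t_gt0 : 0 < t.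
Proof.
rewrite /t; apply: Rdiv_lt_0_compat; first exact: PI_RGT_0.
apply: lt_0_INR; apply/ssrnat.ltP; exact: leq_trans k_ge2.
Qed.

Let sin_t_gt0 : 0 < sin t.
Proof.
have k2 : 2 <= INR k by apply: (le_INR 2); apply/ssrnat.leP.
apply: sin_gt_0 => //; have := kt; have := PI_RGT_0; nra.
Qed.

Let cheb_sin j : cheb c j.+1 = sin (INR j * t) / sin t.
Proof.
apply: (Rmult_eq_reg_r (sin t)); last lra.
rewrite cheb_cos_mul_sin /Rdiv Rmult_assoc Rinv_l ?Rmult_1_r ?S_INR; last lra.
by do 2 f_equal; lra.
Qed.

Lemma cheb_cos_gt0 j : (1 <= j)%N -> (j < k)%N -> 0 < cheb c j.+1.
Proof.
move=> /ssrnat.leP/le_INR j1 /ssrnat.ltP/lt_INR jk; rewrite cheb_sin.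
apply: Rdiv_lt_0_compat => //; apply: sin_gt_0; rewrite /= in j1; nra.
Qed.

Lemma cheb_cos_ge0 j : (j <= k)%N -> 0 <= cheb c j.+1.
Proof.
move=> /ssrnat.leP/le_INR jk; have j0 := pos_INR j; rewrite cheb_sin.
apply: Rle_mult_inv_pos => //; apply: sin_ge_0; nra.
Qed.

Lemma cheb_cos_lt0 j : (k < j)%N -> (j < k.*2)%N -> cheb c j.+1 < 0.
Proof.
move=> /ssrnat.ltP/lt_INR kj; rewrite -addnn => /ssrnat.ltP/lt_INR.
rewrite plus_INR => j2k; rewrite cheb_sin /Rdiv.
apply: Rmult_neg_pos; last exact: Rinv_0_lt_compat.
apply: sin_lt_0; nra.
Qed.

Lemma cheb_cos_k : cheb c k = 1.
Proof.
have [k' Ek] : exists k', k = k'.+1 by case: k k_ge2 => // k' _; exists k'.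
rewrite Ek cheb_sin.
have -> : INR k' * t = PI - t by have := kt; rewrite Ek S_INR; lra.
by rewrite sin_PI_x /Rdiv Rinv_r //; apply: Rgt_not_eq.
Qed.

Lemma cheb_cos_kS : cheb c k.+1 = 0.
Proof. by rewrite cheb_sin kt sin_PI /Rdiv Rmult_0_l. Qed.

Lemma cheb_cos_kSS : cheb c k.+2 = -1.
Proof.
rewrite cheb_sin S_INR.
have -> : (INR k + 1) * t = t + PI by lra.
by rewrite neg_sin /Rdiv Ropp_mult_distr_l_reverse Rinv_r //; apply: Rgt_not_eq.
Qed.

End RegularDihedral.
End ChebyshevTrig.

Local Open Scope ring_scope.

Lemma cheb_one (T : comPzRingType) n : cheb (1 : T) n = n%:R - 1.
Proof.
elim/ltn_ind: n => -[|[|n]] IH; rewrite ?sub0r ?subrr //.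
rewrite chebSS (IH n.+1) // (IH n (leqW (ltnSn n))) !mulrS; ring.
Qed.

Lemma cheb_det (T : comPzRingType) (c : T) n q :
  cheb c (n + q) * cheb c q.+1 - cheb c (n + q).+1 * cheb c q = cheb c n.+1.
Proof.
elim: q => [|q IH]; first by rewrite addn0 /= mulr0 mulrN1 sub0r opprK.
by rewrite addnS !chebSS -[RHS]IH; ring.
Qed.

Notation alpha := simple_root.

Definition flip (i : 'I_2) : 'I_2 := if i == ord0 then ord_max else ord0.

Lemma I2P (i : 'I_2) : i = ord0 \/ i = ord_max.
Proof. by case: i => [[|[|//]]] Hi; [left|right]; apply: val_inj. Qed.

Lemma flipK i : flip (flip i) = i.
Proof. by case: (I2P i) => ->. Qed.

Lemma eq_flip i : (i == flip i) = false.
Proof. by case: (I2P i) => ->. Qed.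

Lemma flip_eq i : (flip i == i) = false.
Proof. by case: (I2P i) => ->. Qed.

Lemma eq_or_flip (i j : 'I_2) : j = i \/ j = flip i.
Proof. by case: (I2P i) => ->; case: (I2P j) => ->; auto. Qed.

Lemma alpha_ge0 i j : 0 <= alpha i j 0.
Proof. by rewrite mxE ler0n. Qed.

Lemma mxE_alpha (M : mat) a b : M a b = ((alpha a)^T *m M *m alpha b) 0 0.
Proof.
rewrite /alpha -colE !mxE !big_ord_recl !big_ord0 !mxE.
case: (I2P a) => ->; rewrite /= ?mul1r ?mul0r ?addr0 ?add0r //.
by congr (M _ b); apply: val_inj.
Qed.

Lemma mx_alpha_ext (A B : mat) : (forall i, A *m alpha i = B *m alpha i) -> A = B.
Proof.
move=> AB; apply/matrixP => a b; have := congr1 (fun x : vec => x a 0) (AB b).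
by rewrite /alpha -!colE !mxE.
Qed.

Section GeometricRepresentation.
Variable m : option nat.

Lemma Bform_alpha i j : Bform m (alpha i) (alpha j) = if i == j then 1 else - cosm m.
Proof. by rewrite /Bform -mxE_alpha mxE. Qed.

Lemma BformC x y : Bform m x y = Bform m y x.
Proof.
have Bsym : (Bmat m)^T = Bmat m by apply/matrixP => a b; rewrite !mxE eq_sym.
have trE (M : 'M[R]_1) : M 0 0 = M^T 0 0 by rewrite mxE.
by rewrite /Bform trE !trmx_mul trmxK Bsym mulmxA.
Qed.

Lemma BformDl x y z : Bform m (x + y) z = Bform m x z + Bform m y z.
Proof. by rewrite /Bform linearD /= !mulmxDl !mxE. Qed.

Lemma BformDr x y z : Bform m z (x + y) = Bform m z x + Bform m z y.
Proof. by rewrite /Bform !mulmxDr !mxE. Qed.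

Lemma BformZl a x z : Bform m (a *: x) z = a * Bform m x z.
Proof. by rewrite /Bform linearZ /= -!scalemxAl !mxE. Qed.

Lemma BformZr a x z : Bform m z (a *: x) = a * Bform m z x.
Proof. by rewrite /Bform -!scalemxAr !mxE. Qed.

Lemma gen_mulmx j x : gen m j *m x = x - (2 * Bform m (alpha j) x) *: alpha j.
Proof.
rewrite /gen /refl mulmxBl mul1mx -scalemxAl -!mulmxA [(alpha j)^T *m _]mulmxA.
by rewrite [_ *m x]mx11_scalar mul_mx_scalar scalerA.
Qed.

Lemma gen_alpha j : gen m j *m alpha j = - alpha j.
Proof. by rewrite gen_mulmx Bform_alpha eqxx mulr1 scaler_nat mulr2n opprD addNKr. Qed.

Lemma gen_alpha_flip j :
  gen m j *m alpha (flip j) = alpha (flip j) + (2 * cosm m) *: alpha j.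
Proof. by rewrite gen_mulmx Bform_alpha eq_flip mulrN scaleNr opprK. Qed.

Lemma genK j : gen m j *m gen m j = 1%:M.
Proof.
apply: mx_alpha_ext => l; rewrite -mulmxA mul1mx.
case: (eq_or_flip j l) => ->; first by rewrite gen_alpha mulmxN gen_alpha opprK.
by rewrite gen_alpha_flip mulmxDr -scalemxAr gen_alpha gen_alpha_flip scalerN addrK.
Qed.

Lemma gen_isometry j x y : Bform m (gen m j *m x) (gen m j *m y) = Bform m x y.
Proof.
rewrite !gen_mulmx -!scaleNr !(BformDl, BformDr, BformZl, BformZr) Bform_alpha eqxx.
rewrite [Bform m x (alpha j)]BformC; ring.
Qed.

Lemma evalw_cons j w : evalw m (j :: w) = gen m j *m evalw m w.
Proof. by rewrite /evalw big_cons mulmxE. Qed.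

Lemma evalw_cat w1 w2 : evalw m (w1 ++ w2) = evalw m w1 *m evalw m w2.
Proof. by rewrite /evalw big_cat mulmxE. Qed.

Lemma evalw_rcons w j : evalw m (rcons w j) = evalw m w *m gen m j.
Proof. by rewrite -cats1 evalw_cat /evalw big_seq1. Qed.

Lemma evalw_isometry w x y : Bform m (evalw m w *m x) (evalw m w *m y) = Bform m x y.
Proof.
elim: w => [|j w IH]; first by rewrite /evalw big_nil !mul1mx.
by rewrite evalw_cons -!mulmxA gen_isometry.
Qed.

Lemma evalw_revK w : evalw m (rev w) *m evalw m w = 1%:M.
Proof.
elim: w => [|j w IH]; first by rewrite /evalw big_nil mul1mx.
by rewrite rev_cons evalw_rcons evalw_cons mulmxA -(mulmxA _ (gen m j) (gen m j)) genK mulmx1.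
Qed.

Lemma evalw_Krev w : evalw m w *m evalw m (rev w) = 1%:M.
Proof. by rewrite -{1}(revK w) evalw_revK. Qed.

Lemma invmx_evalw w : invmx (evalw m w) = evalw m (rev w).
Proof.
have [unit_w _] := mulmx1_unit (evalw_Krev w).
by rewrite -[LHS]mulmx1 -(evalw_Krev w) mulmxA mulVmx // mul1mx.
Qed.

Lemma isometry_Bmat (X : mat) :
  (forall x y, Bform m (X *m x) (X *m y) = Bform m x y) -> X^T *m Bmat m *m X = Bmat m.
Proof.
move=> isoX; apply/matrixP => a b.
by rewrite mxE_alpha [RHS]mxE_alpha -/(Bform m _ _) -isoX /Bform trmx_mul !mulmxA.
Qed.

Lemma refl_evalw w j :
  refl m (evalw m w *m alpha j) = evalw m w *m gen m j *m evalw m (rev w).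
Proof.
set x := evalw m w; set x' := evalw m (rev w).
have xTB : x^T *m Bmat m = Bmat m *m x'.
  by rewrite -[LHS]mulmx1 -(evalw_Krev w) mulmxA isometry_Bmat //; apply: evalw_isometry.
rewrite /gen /refl mulmxBr mulmx1 mulmxBl evalw_Krev -/x -/x' -scalemxAr -scalemxAl.
by rewrite trmx_mul -!mulmxA xTB.
Qed.

Lemma refl_opp beta : refl m (- beta) = refl m beta.
Proof. by rewrite /refl linearN /= !mulNmx mulmxN opprK. Qed.

Lemma gen_mul_evalw j w :
  gen m j *m evalw m w = evalw m w *m refl m (evalw m (rev w) *m alpha j).
Proof. by rewrite refl_evalw revK !mulmxA evalw_Krev mul1mx. Qed.

End GeometricRepresentation.

Definition alt_letter (i : 'I_2) (p : nat) : 'I_2 := if odd p then flip i else i.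

Definition alt_word (i : 'I_2) (n : nat) : seq 'I_2 := mkseq (alt_letter i) n.

Lemma alt_letterS i p : alt_letter i p.+1 = flip (alt_letter i p).
Proof. by rewrite /alt_letter /=; case: (odd p); rewrite ?flipK. Qed.

Lemma alt_letterD i p q : alt_letter (alt_letter i p) q = alt_letter i (p + q).
Proof. by rewrite /alt_letter oddD; case: (odd p); case: (odd q); rewrite ?flipK. Qed.

Lemma alt_letter_flip i p : alt_letter (flip i) p = flip (alt_letter i p).
Proof. by rewrite /alt_letter; case: (odd p). Qed.

Lemma alt_letter_inj p : injective (alt_letter^~ p).
Proof. by rewrite /alt_letter => i j; case: (odd p) => // /(congr1 flip); rewrite !flipK. Qed.

Lemma alt_letter_double i p : alt_letter i (p + p) = i.
Proof. by rewrite /alt_letter addnn odd_double. Qed.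

Lemma alt_letter_double_succ i p : alt_letter i (p + p.+1) = flip i.
Proof. by rewrite /alt_letter addnS /= addnn odd_double. Qed.

Lemma size_alt_word i n : size (alt_word i n) = n.
Proof. exact: size_mkseq. Qed.

Lemma alt_wordS i n : alt_word i n.+1 = rcons (alt_word i n) (alt_letter i n).
Proof. exact: mkseqS. Qed.

Lemma alt_wordD i p q : alt_word i (p + q) = alt_word i p ++ alt_word (alt_letter i p) q.
Proof.
elim: q => [|q IH]; first by rewrite addn0 cats0.
by rewrite addnS !alt_wordS IH rcons_cat alt_letterD.
Qed.

Lemma alt_word_cons i n : alt_word i n.+1 = i :: alt_word (flip i) n.
Proof. exact: (alt_wordD i 1 n). Qed.

Lemma rev_alt_word i n : rev (alt_word i n.+1) = alt_word (alt_letter i n) n.+1.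
Proof.
elim: n => [|n IH] //.
by rewrite alt_wordS rev_rcons IH [in RHS]alt_word_cons alt_letterS flipK.
Qed.

Section AlternatingElements.
Variable m : option nat.

Definition alt_elt i n := evalw m (alt_word i n).

(* [alt_root i n.+1] is [alt_elt i n *m alpha (alt_letter i n)] in coordinates
   ([alt_rootE]). *)
Definition alt_root i n : vec :=
  cheb (cosm m) n.+1 *: alpha i + cheb (cosm m) n *: alpha (flip i).

Definition alt_reduced n := if m is Some k then (n <= k)%N else true.

Lemma alt_reduced_le n p : alt_reduced n -> (p <= n)%N -> alt_reduced p.
Proof. by rewrite /alt_reduced; case: m => // k nk pn; apply: leq_trans nk. Qed.

Lemma alt_elt0 i : alt_elt i 0 = 1%:M.
Proof. by rewrite /alt_elt /evalw big_nil. Qed.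

Lemma alt_eltS i n : alt_elt i n.+1 = alt_elt i n *m gen m (alt_letter i n).
Proof. by rewrite /alt_elt alt_wordS evalw_rcons. Qed.

Lemma alt_elt_cons i n : alt_elt i n.+1 = gen m i *m alt_elt (flip i) n.
Proof. by rewrite /alt_elt alt_word_cons evalw_cons. Qed.

Lemma alt_eltD i p q : alt_elt i (p + q) = alt_elt i p *m alt_elt (alt_letter i p) q.
Proof. by rewrite /alt_elt alt_wordD evalw_cat. Qed.

Lemma alt_elt_revK i n : alt_elt (alt_letter i n) n.+1 *m alt_elt i n.+1 = 1%:M.
Proof. by rewrite /alt_elt -rev_alt_word evalw_revK. Qed.

Lemma alt_root_self i n : alt_root i n i 0 = cheb (cosm m) n.+1.
Proof. by rewrite !mxE !eqxx ?eq_flip ?flip_eq /= mulr1 mulr0 addr0. Qed.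

Lemma alt_root_flip i n : alt_root i n (flip i) 0 = cheb (cosm m) n.
Proof. by rewrite !mxE !eqxx ?eq_flip ?flip_eq /= mulr1 mulr0 add0r. Qed.

Lemma alt_elt_alpha i n :
  alt_elt i n *m alpha (alt_letter i n) = alt_root i n.+1 /\
  alt_elt i n *m alpha (alt_letter i n.+1) = - alt_root i n.
Proof.
elim: n => [|n [IH1 IH2]].
  rewrite alt_elt0 !mul1mx /alt_root /= mulr0 sub0r opprK scale1r !scale0r.
  by rewrite addr0 add0r scaleN1r opprK alt_letterS.
rewrite alt_eltS -!mulmxA !alt_letterS flipK gen_alpha mulmxN IH1; split=> //.
rewrite gen_alpha_flip mulmxDr -scalemxAr -alt_letterS IH2 IH1.
by apply/matrixP => a b; rewrite /alt_root !chebSS !mxE; ring.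
Qed.

Lemma alt_rootE i n : alt_root i n.+1 = alt_elt i n *m alpha (alt_letter i n).
Proof. by case: (alt_elt_alpha i n). Qed.

Lemma alt_elt_refl_cons i n :
  alt_elt i n.+1 *m refl m (alt_root (alt_letter i n) n.+2) = alt_elt (flip i) n.+2.
Proof.
rewrite [RHS]alt_elt_cons flipK /alt_elt gen_mul_evalw rev_alt_word -/(alt_elt _ _).
by rewrite alt_rootE alt_letterD alt_letter_double_succ.
Qed.

Lemma alt_elt_refl_behead i n :
  alt_elt i n.+1 *m refl m (alt_root (alt_letter i n) n.+1) = alt_elt (flip i) n.
Proof.
have [_ root_e] := alt_elt_alpha (alt_letter i n) n.+1.
rewrite alt_letterD -addSnnS alt_letter_double in root_e.
rewrite -refl_opp -root_e /alt_elt -rev_alt_word -gen_mul_evalw -/(alt_elt _ _).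
by rewrite alt_elt_cons mulmxA genK mul1mx.
Qed.

End AlternatingElements.

Section ReducedAlternatingElements.
Variable m : option nat.
Hypothesis m_ge2 : forall k, m = Some k -> (2 <= k)%N.

Lemma cheb_cosm_gt0 j : (1 <= j)%N -> alt_reduced m j.+1 -> 0 < cheb (cosm m) j.+1.
Proof.
rewrite /alt_reduced; case: m m_ge2 => [k|] k2 j1 jk.
  exact/RltP/(cheb_cos_gt0 (k2 k erefl)).
by rewrite cheb_one mulrSr addrK ltr0n.
Qed.

Lemma cheb_cosm_ge0 j : alt_reduced m j -> 0 <= cheb (cosm m) j.+1.
Proof.
rewrite /alt_reduced; case: m m_ge2 => [k|] k2 jk.
  exact/RleP/(cheb_cos_ge0 (k2 k erefl)).
by rewrite cheb_one mulrSr addrK ler0n.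
Qed.

(* In this range [cheb (cosm m)] vanishes only at [k.+1], and its next value is [-1]. *)
Lemma cheb_cosm_zero_next p : (1 <= p)%N -> (forall k, m = Some k -> (p < k.*2)%N) ->
  cheb (cosm m) p.+1 = 0 -> cheb (cosm m) p.+2 < 0.
Proof.
case: m m_ge2 => [k|] k2 p1 p2k; last first.
  by move=> /eqP; rewrite cheb_one mulrSr addrK pnatr_eq0 eqn0Ngt p1.
have {k2 p2k}[k2 p2k] := (k2 k erefl, p2k k erefl).
case: (ltngtP p k) => [pk|kp|->] cheb0.
- by have := cheb_cos_gt0 k2 p1 pk => /RltP; rewrite cheb0 ltxx.
- by have := cheb_cos_lt0 k2 kp p2k => /RltP; rewrite cheb0 ltxx.
- by rewrite [cosm _]/= (cheb_cos_kSS k2); apply/RltP; rewrite -R0E; lra.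
Qed.

Lemma alt_elt_braid k i : m = Some k -> alt_elt m i k = alt_elt m (flip i) k.
Proof.
move=> mk; have k2 := m_ge2 mk; rewrite mk.
have root_k j : alt_root (Some k) j k = alpha (flip j).
  rewrite /alt_root [cosm _]/= (cheb_cos_kS k2) (cheb_cos_k k2) R0E R1E.
  by rewrite scale0r add0r scale1r.
have root_kS j : alt_root (Some k) j k.+1 = - alpha j.
  rewrite /alt_root [cosm _]/= (cheb_cos_kSS k2) (cheb_cos_kS k2) R0E scale0r addr0.
  by rewrite -scaleN1r; congr (_ *: _); rewrite -R1E.
have [A1 A2] := alt_elt_alpha (Some k) i k.
have [B1 B2] := alt_elt_alpha (Some k) (flip i) k.
rewrite root_kS in A1; rewrite root_kS in B1; rewrite root_k in A2; rewrite root_k in B2.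
rewrite alt_letterS in A2; rewrite alt_letter_flip in B1.
rewrite alt_letterS alt_letter_flip flipK in B2.
apply: mx_alpha_ext => l; case: (eq_or_flip (alt_letter i k) l) => ->.
  by rewrite A1 B2 flipK.
by rewrite A2 B1.
Qed.

Lemma evalw_alt_elt w :
  exists i n, evalw m w = alt_elt m i n /\ (n <= size w)%N /\ alt_reduced m n.
Proof.
elim: w => [|j w [i [n [Ew [nw red_n]]]]].
  by exists ord0, 0%N; rewrite alt_elt0 /evalw big_nil /alt_reduced; case: m.
rewrite evalw_cons Ew /=.
case: n Ew nw red_n => [|n] _ nw red_n.
  exists j, 1%N; rewrite alt_elt0 mulmx1 alt_elt_cons alt_elt0 mulmx1; split=> //.
  by split=> //; rewrite /alt_reduced; case: m m_ge2 => // k k2; apply: ltnW (k2 k erefl).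
have shorter : (n <= (size w).+1)%N by rewrite (leq_trans (leqnSn n)) ?(leq_trans nw).
case: (eq_or_flip j i) => ->.
  exists (flip j), n; rewrite alt_elt_cons mulmxA genK mul1mx; split=> //.
  by split=> //; apply: alt_reduced_le red_n _.
case red_nSS : (alt_reduced m n.+2).
  by exists j, n.+2; rewrite -alt_elt_cons.
have [k mk] : exists k, m = Some k.
  by move: red_nSS; rewrite /alt_reduced; case: m => [k|] //; exists k.
have nSk : n.+1 = k.
  move: red_n red_nSS; rewrite /alt_reduced mk => nk /negbT; rewrite -ltnNge => kn.
  by apply/eqP; rewrite eqn_leq nk.
exists (flip j), n; split; last by split=> //; apply: alt_reduced_le red_n _.
by rewrite nSk (alt_elt_braid _ mk) flipK -nSk alt_elt_cons mulmxA genK mul1mx.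
Qed.

Lemma alt_elt_neq1 i p : (1 <= p)%N -> (forall k, m = Some k -> (p < k.*2)%N) ->
  alt_elt m i p <> 1%:M.
Proof.
move=> p1 p2k alt1; have [A1 A2] := alt_elt_alpha m i p; rewrite alt1 !mul1mx in A1 A2.
have cp_le0 : cheb (cosm m) p.+1 <= 0.
  by have := alpha_ge0 (alt_letter i p.+1) i; rewrite A2 mxE alt_root_self oppr_ge0.
have cp_ge0 : 0 <= cheb (cosm m) p.+1.
  by have := alpha_ge0 (alt_letter i p) (flip i); rewrite A1 alt_root_flip.
have cpS_ge0 : 0 <= cheb (cosm m) p.+2.
  by have := alpha_ge0 (alt_letter i p) i; rewrite A1 alt_root_self.
have /eqP cp0 : cheb (cosm m) p.+1 == 0 by rewrite eq_le cp_le0 cp_ge0.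
by have := cheb_cosm_zero_next p1 p2k cp0; rewrite ltNge cpS_ge0.
Qed.

Lemma alt_elt_neq_shorter i j n n' : alt_reduced m n -> (n' < n)%N ->
  alt_elt m j n' <> alt_elt m i n.
Proof.
move=> red_n n'n E.
have short p : (p < n + n)%N -> forall k, m = Some k -> (p < k.*2)%N.
  move=> pn k mk; move: red_n; rewrite /alt_reduced mk -addnn => nk.
  by apply: leq_trans pn _; rewrite leq_add.
case: (eq_or_flip i j) => ji; subst j.
  have split_n : alt_elt m i n = alt_elt m i n' *m alt_elt m (alt_letter i n') (n - n').
    by rewrite -alt_eltD subnKC // ltnW.
  apply: (@alt_elt_neq1 (alt_letter i n') (n - n')); first by rewrite subn_gt0.
    apply: short; rewrite (leq_ltn_trans (leq_subr _ _)) //.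
    by rewrite -addn1 leq_add2l (leq_ltn_trans _ n'n).
  have := congr1 (mulmx (evalw m (rev (alt_word i n')))) E.
  by rewrite split_n mulmxA /alt_elt evalw_revK mul1mx => <-.
case: n' E n'n => [|n'] E n'n.
  apply: (@alt_elt_neq1 i n n'n); first by apply: short; rewrite -addn1 leq_add2l.
  by rewrite -E alt_elt0.
apply: (@alt_elt_neq1 (alt_letter (flip i) n') (n'.+1 + n)) => //.
  by apply: short; rewrite ltn_add2r.
rewrite alt_eltD alt_letterD alt_letter_double_succ flipK -E.
exact: alt_elt_revK.
Qed.

Lemma has_len_alt_elt i n : alt_reduced m n -> has_len m (alt_elt m i n) n.
Proof.
move=> red_n; split; first by exists (alt_word i n); rewrite size_alt_word.
move=> w Ew; have [j [n' [E [n'w _]]]] := evalw_alt_elt w.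
apply: leq_trans n'w; rewrite leqNgt; apply/negP => n'n.
by apply: (alt_elt_neq_shorter (i := i) (j := j) red_n n'n); rewrite -E.
Qed.

Lemma inW_alt_elt x : inW m x ->
  exists i n, x = alt_elt m i n /\ alt_reduced m n /\ has_len m x n.
Proof.
move=> [w ->]; have [i [n [-> [_ red_n]]]] := evalw_alt_elt w.
by exists i, n; split=> //; split=> //; apply: has_len_alt_elt.
Qed.

End ReducedAlternatingElements.

Section BruhatOrder.
Variable m : option nat.

Lemma has_len_inj x a b : has_len m x a -> has_len m x b -> a = b.
Proof.
move=> [[w [<- Ew]] min_a] [[w' [<- Ew']] min_b].
by apply/eqP; rewrite eqn_leq min_a // min_b.
Qed.

Lemma bruhat_chain_len x y : clos_trans mat (bruhat_step m) x y ->
  exists a b, has_len m x a /\ has_len m y b /\ (a < b)%N.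
Proof.
elim=> [x0 y0 [_ [_ [_ [_ lens]]]] | x0 y0 z0 _ [a [b [la [lb ab]]]] _ [b' [c [lb' [lc bc]]]]].
  exact: lens.
exists a, c; split=> //; split=> //.
by rewrite (leq_trans ab) // (has_len_inj lb lb') ltnW.
Qed.

Lemma bruhat_lt_len x y a b : bruhat_lt m x y -> has_len m x a -> has_len m y b -> (a < b)%N.
Proof.
case=> [[->|xy] neq] la lb; first by [].
have [a' [b' [la' [lb' ab]]]] := bruhat_chain_len xy.
by rewrite (has_len_inj la la') (has_len_inj lb lb').
Qed.

Lemma bruhat_step_cover x y n :
  bruhat_step m x y -> has_len m x n -> has_len m y n.+1 -> bruhat_cover m x y.
Proof.
move=> step lx ly; split.
  split; first by right; apply: t_step.
  by move=> xy; subst y; apply: (n_Sn n); apply: has_len_inj lx ly.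
move=> z [->|xz]; first by left.
case=> [->|zy]; first by right.
have [a [b [la [lb ab]]]] := bruhat_chain_len xz.
have [b' [c [lb' [lc bc]]]] := bruhat_chain_len zy.
rewrite -(has_len_inj lx la) in ab; rewrite -(has_len_inj ly lc) -(has_len_inj lb lb') in bc.
by have := leq_trans ab bc; rewrite ltnn.
Qed.

Lemma isRefl_conj w j : isRefl m (evalw m w *m gen m j *m evalw m (rev w)).
Proof. by exists (evalw m w), j; split; [exists w | rewrite invmx_evalw]. Qed.

Lemma isRefl_gen j : isRefl m (gen m j).
Proof. by have := isRefl_conj [::] j; rewrite /evalw big_nil mul1mx mulmx1. Qed.

Lemma root_of_gen j : root_of m (gen m j) (alpha j).
Proof.
split; first exact: isRefl_gen.
split=> //; split; last by move=> l; apply: alpha_ge0.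
by exists 1%:M, j; split; [exists [::]; rewrite /evalw big_nil | rewrite mul1mx].
Qed.

Hypothesis m_ge2 : forall k, m = Some k -> (2 <= k)%N.

Lemma root_of_alt_root e n : alt_reduced m n.+1 ->
  root_of m (refl m (alt_root m e n.+1)) (alt_root m e n.+1).
Proof.
move=> red_nS; rewrite alt_rootE.
split; first by rewrite /alt_elt refl_evalw; apply: isRefl_conj.
split=> //; split.
  by exists (alt_elt m e n), (alt_letter e n); split=> //; exists (alt_word e n).
rewrite -alt_rootE => j; case: (eq_or_flip e j) => ->.
  by rewrite alt_root_self; apply: (cheb_cosm_ge0 m_ge2).
by rewrite alt_root_flip; apply: (cheb_cosm_ge0 m_ge2); apply: alt_reduced_le red_nS _.
Qed.

Lemma bruhat_step_alt i' i n : alt_reduced m n.+1 ->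
  bruhat_step m (alt_elt m i' n) (alt_elt m i n.+1).
Proof.
move=> red_nS; split; first by exists (alt_word i' n).
have lens : exists a b,
    has_len m (alt_elt m i' n) a /\ has_len m (alt_elt m i n.+1) b /\ (a < b)%N.
  exists n, n.+1; split; last by split=> //; apply: (has_len_alt_elt m_ge2).
  by apply: (has_len_alt_elt m_ge2) => //; apply: alt_reduced_le red_nS _.
case: (eq_or_flip i i') lens => -> lens.
  by exists (gen m (alt_letter i n)); rewrite -alt_eltS; split; [apply: isRefl_gen | split].
set w := rev (alt_word (flip i) n).
exists (evalw m w *m gen m i *m evalw m (rev w)); split; first exact: isRefl_conj.
split=> //; by rewrite revK !mulmxA /alt_elt evalw_Krev mul1mx -evalw_cons -alt_word_cons.
Qed.

Lemma bruhat_cover_alt i' i n : alt_reduced m n.+1 ->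
  bruhat_cover m (alt_elt m i' n) (alt_elt m i n.+1).
Proof.
move=> red_nS; apply: (bruhat_step_cover (bruhat_step_alt i' i red_nS)); last first.
  exact: (has_len_alt_elt m_ge2).
by apply: (has_len_alt_elt m_ge2) => //; apply: alt_reduced_le red_nS _.
Qed.

Lemma bruhat_le_alt i' i a c : alt_reduced m c -> (a < c)%N ->
  bruhat_le m (alt_elt m i' a) (alt_elt m i c).
Proof.
move=> red_c ac; right; elim: c i red_c ac => [|c IH] i // red_cS.
have red_c := alt_reduced_le red_cS (leqnSn c).
rewrite ltnS leq_eqVlt => /predU1P [->|ac]; first exact/t_step/bruhat_step_alt.
exact: t_trans (IH i' red_c ac) (t_step _ _ _ _ (bruhat_step_alt i' i red_cS)).
Qed.

End BruhatOrder.

Lemma Cone_self (A : vec -> Prop) x : A x -> Cone A x.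
Proof.
move=> Ax; exists 1%N, (fun _ => 1), (fun _ => x); split=> //.
by rewrite big_ord1 scale1r.
Qed.

Lemma Cone_pair (A : vec -> Prop) x y z (c p q : R) :
  0 < c -> c *: z = p *: x + q *: y -> 0 <= p -> 0 <= q -> A x -> A y -> Cone A z.
Proof.
move=> c_gt0 cz p_ge0 q_ge0 Ax Ay.
exists 2%N, (fun k => if k == ord0 then p / c else q / c),
  (fun k => if k == ord0 then x else y).
split; first by move=> k; case: (k == ord0); rewrite divr_ge0 // ltW.
rewrite !big_ord_recl big_ord0 addr0 /= !(mulrC _ c^-1) -!scalerA -scalerDr -cz.
by rewrite scalerA mulVf ?scale1r // gt_eqF.
Qed.

Section RootsOfCovers.
Variable m : option nat.

Definition roots_down (u v : mat) (beta : vec) := exists t, root_of m t beta /\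
  bruhat_le m u (v *m t) /\ bruhat_cover m (v *m t) v.

Definition roots_up (u v : mat) (beta : vec) := exists t, root_of m t beta /\
  bruhat_cover m u (u *m t) /\ bruhat_le m (u *m t) v.

Definition roots_cones_meet u v :=
  (exists beta, roots_down u v beta /\ Cone (roots_up u v) beta) /\
  (exists beta, roots_up u v beta /\ Cone (roots_down u v) beta).

Lemma roots_cones_meet_common u v beta :
  roots_down u v beta -> roots_up u v beta -> roots_cones_meet u v.
Proof. by move=> down up; split; exists beta; split=> //; apply: Cone_self. Qed.

(* Instances of [cheb_det]: when the coefficients are nonnegative, [alpha e],
   [alt_root e q], [alt_root e (n + q)], [alpha (flip e)] lie in this order in
   the positive quadrant. *)
Lemma alt_root_interleave_l e n q :
  cheb (cosm m) q.+1 *: alt_root m e (n + q) =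
  cheb (cosm m) (n + q).+1 *: alt_root m e q + cheb (cosm m) n.+1 *: alpha (flip e).
Proof.
rewrite -(cheb_det (cosm m) n q) /alt_root.
by apply/matrixP => r s; rewrite !mxE; ring.
Qed.

Lemma alt_root_interleave_r e n q :
  cheb (cosm m) (n + q) *: alt_root m e q =
  cheb (cosm m) n.+1 *: alpha e + cheb (cosm m) q *: alt_root m e (n + q).
Proof.
rewrite -(cheb_det (cosm m) n q) /alt_root.
by apply/matrixP => r s; rewrite !mxE; ring.
Qed.

Hypothesis m_ge2 : forall k, m = Some k -> (2 <= k)%N.

Lemma roots_down_last u i b : alt_reduced m b.+1 -> bruhat_le m u (alt_elt m i b) ->
  roots_down u (alt_elt m i b.+1) (alpha (alt_letter i b)).
Proof.
move=> red_bS le_u; exists (gen m (alt_letter i b)); split; first exact: root_of_gen.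
by rewrite alt_eltS -mulmxA genK mulmx1 -alt_eltS; split=> //; apply: bruhat_cover_alt.
Qed.

Lemma roots_down_first u i b : alt_reduced m b.+1 -> bruhat_le m u (alt_elt m (flip i) b) ->
  roots_down u (alt_elt m i b.+1) (alt_root m (alt_letter i b) b.+1).
Proof.
move=> red_bS le_u; exists (refl m (alt_root m (alt_letter i b) b.+1)).
split; first exact: root_of_alt_root.
by rewrite alt_elt_refl_behead; split=> //; apply: bruhat_cover_alt.
Qed.

Lemma roots_up_last j a v : alt_reduced m a.+1 -> bruhat_le m (alt_elt m j a.+1) v ->
  roots_up (alt_elt m j a) v (alpha (alt_letter j a)).
Proof.
move=> red_aS le_v; exists (gen m (alt_letter j a)); split; first exact: root_of_gen.
by rewrite -alt_eltS; split=> //; apply: bruhat_cover_alt.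
Qed.

Lemma roots_up_first j a v : alt_reduced m a.+2 -> bruhat_le m (alt_elt m (flip j) a.+2) v ->
  roots_up (alt_elt m j a.+1) v (alt_root m (alt_letter j a) a.+2).
Proof.
move=> red_aSS le_v; exists (refl m (alt_root m (alt_letter j a) a.+2)).
split; first exact: root_of_alt_root.
by rewrite alt_elt_refl_cons; split=> //; apply: bruhat_cover_alt.
Qed.

End RootsOfCovers.

Section DihedralCones.
Variable m : option nat.
Hypothesis m_ge2 : forall k, m = Some k -> (2 <= k)%N.

Lemma bruhat_le_alt_same_letter j i a c : alt_reduced m c -> (a <= c)%N ->
  alt_letter j a = alt_letter i c -> bruhat_le m (alt_elt m j a) (alt_elt m i c).
Proof.
move=> red_c; rewrite leq_eqVlt => /predU1P [-> /alt_letter_inj -> | ac _]; first by left.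
exact: bruhat_le_alt.
Qed.

Lemma roots_cones_meet_same_last j i a b : alt_reduced m b.+1 -> (a <= b)%N ->
  alt_letter j a = alt_letter i b -> roots_cones_meet m (alt_elt m j a) (alt_elt m i b.+1).
Proof.
move=> red_bS ab same_last; apply: (roots_cones_meet_common (beta := alpha (alt_letter i b))).
  apply: roots_down_last => //; apply: bruhat_le_alt_same_letter => //.
  exact: alt_reduced_le red_bS _.
rewrite -same_last; apply: roots_up_last => //; first exact: alt_reduced_le red_bS _.
by apply: bruhat_le_alt_same_letter; rewrite // !alt_letterS same_last.
Qed.

Lemma roots_cones_meet_interleaved j i a b : alt_reduced m b.+1 -> (a.+1 < b)%N ->
  alt_letter j a = alt_letter i b -> roots_cones_meet m (alt_elt m j a.+1) (alt_elt m i b.+1).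
Proof.
move=> red_bS ab letter_a; set e := alt_letter i b.
set X := cheb (cosm m); set n := (b - a.+1)%N.
have nq : (n + a.+2 = b.+1)%N by rewrite /n addnS subnK // ltnW.
have red_aSSS : alt_reduced m a.+3 := alt_reduced_le red_bS (ab : (a.+3 <= b.+1)%N).
have le_u j' : bruhat_le m (alt_elt m j a.+1) (alt_elt m j' b).
  exact: (bruhat_le_alt m_ge2 j j' (alt_reduced_le red_bS (leqnSn b)) ab).
have le_v j' : bruhat_le m (alt_elt m j' a.+2) (alt_elt m i b.+1).
  exact: (bruhat_le_alt m_ge2 j' i red_bS (ab : (a.+2 < b.+1)%N)).
have down_e := roots_down_last m_ge2 red_bS (le_u i).
have down_root := roots_down_first m_ge2 red_bS (le_u (flip i)).
have up_flip : roots_up m (alt_elt m j a.+1) (alt_elt m i b.+1) (alpha (flip e)).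
  rewrite /e -letter_a -alt_letterS; apply: roots_up_last => //.
  exact: alt_reduced_le red_aSSS _.
have up_root := roots_up_first m_ge2 (alt_reduced_le red_aSSS (leqnSn _)) (le_v (flip j)).
rewrite letter_a -/e in up_root.
have X_ge0 p : alt_reduced m p -> 0 <= X p.+1 by apply: cheb_cosm_ge0.
have Xn_ge0 : 0 <= X n.+1.
  exact: X_ge0 (alt_reduced_le red_bS (leq_trans (leq_subr _ _) (leqnSn b))).
split.
  exists (alt_root m e b.+1); split=> //.
  apply: (Cone_pair (c := X a.+3) (p := X b.+2) (q := X n.+1)) up_root up_flip => //.
  - exact: cheb_cosm_gt0.
  - by rewrite -nq; apply: alt_root_interleave_l.
  - exact: X_ge0 red_bS.
exists (alt_root m e a.+2); split=> //.
apply: (Cone_pair (c := X b.+1) (p := X n.+1) (q := X a.+2)) down_e down_root => //.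
- by apply: cheb_cosm_gt0 => //; apply: leq_trans ab.
- by rewrite -nq; apply: alt_root_interleave_r.
- exact: X_ge0 (alt_reduced_le red_aSSS (leqW (leqnSn a.+1))).
Qed.

Lemma roots_cones_meet_alt j i a b : alt_reduced m b.+1 -> (a <= b)%N ->
  roots_cones_meet m (alt_elt m j a) (alt_elt m i b.+1).
Proof.
move=> red_bS ab; set e := alt_letter i b.
case: a ab => [|a] ab.
  by rewrite alt_elt0 -(alt_elt0 m e); apply: roots_cones_meet_same_last.
case: (eq_or_flip e (alt_letter j a.+1)) => [|/(congr1 flip)].
  exact: roots_cones_meet_same_last.
rewrite alt_letterS !flipK => letter_a.
move: ab; rewrite leq_eqVlt => /predU1P [ab|ab]; last exact: roots_cones_meet_interleaved.
subst b; have ji : j = flip i.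
  by apply: (@alt_letter_inj a); rewrite letter_a /e alt_letterS alt_letter_flip.
subst j; apply: (roots_cones_meet_common (beta := alt_root m e a.+2)).
  by apply: roots_down_first => //; left.
by rewrite -letter_a; apply: roots_up_first => //; rewrite flipK; left.
Qed.

End DihedralCones.

Theorem proposition3p7 (m : option nat)
  (hm : forall k, m = Some k -> (2 <= k)%N)
  (u v : mat) (hu : inW m u) (hv : inW m v) (huv : bruhat_lt m u v) :
  let Rs := fun beta => exists t, root_of m t beta /\
              bruhat_le m u (v *m t) /\ bruhat_cover m (v *m t) v in
  let Rs' := fun beta => exists t, root_of m t beta /\
              bruhat_cover m u (u *m t) /\ bruhat_le m (u *m t) v in
  (exists beta, Rs beta /\ Cone Rs' beta) /\
  (exists beta, Rs' beta /\ Cone Rs beta).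
Proof.
have [j [a [Eu [_ len_u]]]] := inW_alt_elt hm hu.
have [i [b [Ev [red_b len_v]]]] := inW_alt_elt hm hv.
have := bruhat_lt_len huv len_u len_v; rewrite Eu Ev.
case: b red_b {Ev len_v} => [//|b] red_bS ab.
exact: roots_cones_meet_alt.
Qed.
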